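(* Let $G$ be a compact, totally disconnected group and $\alpha$ an automorphism of $G$ such that $(G,\alpha)$ is topologically transitive, and let $N\le G$ be a finite, normal, $\alpha$-stable subgroup. Then $N$ is contained in the centre of $G$.
   Context: $(G,\alpha)$ is topologically transitive if some orbit $\{\alpha^n(x):n\in\mathbb{Z}\}$ is dense in $G$. A subgroup $N$ is $\alpha$-stable if $\alpha(N)=N$. *)

From HB Require Import structures.
From mathcomp Require Import all_boot all_algebra.
From mathcomp Require Import all_classical all_reals topology.
Set Implicit Arguments. Unset Strict Implicit. Unset Printing Implicit Defensive.
Local Open Scope classical_set_scope.

Definition is_topological_group (T : topologicalType)
  (mul : T -> T -> T) (inv : T -> T) (e : T) : Prop :=
  [/\ (forall x y z, mul x (mul y z) = mul (mul x y) z),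
      (forall x, mul e x = x /\ mul x e = x),
      (forall x, mul (inv x) x = e /\ mul x (inv x) = e),
      continuous (fun p : T * T => mul p.1 p.2)
    & continuous inv].

Definition is_topological_automorphism (T : topologicalType)
  (mul : T -> T -> T) (alpha beta : T -> T) : Prop :=
  [/\ (forall x y, alpha (mul x y) = mul (alpha x) (alpha y)),
      cancel alpha beta, cancel beta alpha,
      continuous alpha & continuous beta].

Definition iterz (T : Type) (alpha beta : T -> T) (n : int) : T -> T :=
  match n with
  | Posz k => iter k alpha
  | Negz k => iter k.+1 beta
  end.

Definition orbitZ (T : Type) (alpha beta : T -> T) (x : T) : set T :=
  [set y | exists n : int, y = iterz alpha beta n x].

Definition topologically_transitive (T : topologicalType) (alpha beta : T -> T)
  : Prop := exists x : T, dense (orbitZ alpha beta x).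

Definition is_subgroup (T : Type) (mul : T -> T -> T) (inv : T -> T) (e : T)
  (N : set T) : Prop :=
  [/\ N e, (forall x y, N x -> N y -> N (mul x y)) & (forall x, N x -> N (inv x))].

Definition is_normal (T : Type) (mul : T -> T -> T) (inv : T -> T) (N : set T)
  : Prop := forall g x, N x -> N (mul (mul g x) (inv g)).

Definition centre (T : Type) (mul : T -> T -> T) : set T :=
  [set z | forall g, mul z g = mul g z].

From HB Require Import structures.
From mathcomp Require Import all_boot all_algebra.
From mathcomp Require Import all_classical all_reals topology.
Local Open Scope classical_set_scope.

(* The centralizer C of N is the finite intersection of the commutants of the
   elements of N. Each commutant is closed (equalizer of continuous maps into a
   Hausdorff space) and open (conjugation maps the group continuously into the
   discrete set N). Since alpha permutes N, C is alpha-invariant; so C and its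
   complement are disjoint invariant open sets, and a dense orbit cannot meet
   both. As C contains the unit, C is the whole group. *)

Section Topology.
Context {T : topologicalType}.

Lemma open_fin_bigcap (I : choiceType) (D : set I) (F : I -> set T) :
  finite_set D -> (forall i, D i -> open (F i)) -> open (\bigcap_(i in D) F i).
Proof.
move=> finD oF; rewrite -closedC setC_bigcap.
by apply: closed_bigcup => // i /oF; rewrite -closedC.
Qed.

Lemma near_neq_continuous {U : topologicalType} {f g : T -> U} {x : T} :
  hausdorff_space U -> {for x, continuous f} -> {for x, continuous g} ->
  f x <> g x -> \forall y \near x, f y <> g y.
Proof.
rewrite open_hausdorff => hU cf cg /eqP /hU [[A B] /= [fxA gxB] [oA oB /eqP AB0]].
have nA : nbhs (f x) A by apply: open_nbhs_nbhs; split => //; rewrite -inE.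
have nB : nbhs (g x) B by apply: open_nbhs_nbhs; split => //; rewrite -inE.
near=> y => fgy.
have Afy : A (f y) by near: y; exact: cf.
have Bgy : B (g y) by near: y; exact: cg.
have : (A `&` B) (f y) by split => //; rewrite fgy.
by rewrite AB0.
Unshelve. all: by end_near. Qed.

Lemma closed_equalizer (U : topologicalType) (f g : T -> U) :
  hausdorff_space U -> continuous f -> continuous g -> closed [set x | f x = g x].
Proof.
move=> hU cf cg; rewrite closedE => x /= nfg; apply: contrapT => fgx.
exact/nfg/(near_neq_continuous hU (cf x) (cg x) fgx).
Qed.

Lemma continuous_pointwise_mul (mul : T -> T -> T) (f g : T -> T) :
  continuous (fun p : T * T => mul p.1 p.2) -> continuous f -> continuous g ->
  continuous (fun x => mul (f x) (g x)).
Proof.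
move=> cmul cf cg x.
apply: (@continuous2_cvg _ _ _ _ _ _ f g mul) => //.
- exact: (cmul (f x, g x)).
- exact: cf.
- exact: cg.
Qed.

End Topology.

Section Transitivity.
Context {T : topologicalType} {alpha beta : T -> T}.
Hypothesis betaK : cancel beta alpha.

Lemma iterz_invariant {A : set T} : (forall y, A (alpha y) <-> A y) ->
  forall n y, A (iterz alpha beta n y) <-> A y.
Proof.
move=> Aalpha.
have Abeta y : A (beta y) <-> A y.
  by apply: iff_sym; have := Aalpha (beta y); rewrite betaK.
case=> k y /=; elim: k => [|k IH] /=.
- by [].
- exact: iff_trans (Aalpha _) IH.
- exact: Abeta.
- exact: iff_trans (Abeta _) IH.
Qed.

Lemma transitive_invariant_clopen {A : set T} :
  topologically_transitive alpha beta -> open A -> closed A ->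
  (forall y, A (alpha y) <-> A y) -> A !=set0 -> A = setT.
Proof.
move=> [x dx] oA cA Aalpha A0.
have Ax : A x.
  have [y [Ay [n yE]]] := dx A A0 oA.
  by apply: (iterz_invariant Aalpha n x).1; rewrite -yE.
apply/seteqP; split => // g _; apply: contrapT => nAg.
have [y [nAy [n yE]]] := dx (~` A) (ex_intro _ g nAg) (closed_openC cA).
by apply: nAy; rewrite yE; apply: (iterz_invariant Aalpha n x).2.
Qed.

End Transitivity.

Definition commutant {T : Type} (mul : T -> T -> T) (m : T) : set T :=
  [set g | mul m g = mul g m].

Definition centralizer {T : Type} (mul : T -> T -> T) (N : set T) : set T :=
  \bigcap_(m in N) commutant mul m.

Lemma centralizer_morph (T : Type) (mul : T -> T -> T) (alpha : T -> T)
    (N : set T) :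
  {morph alpha : x y / mul x y} -> injective alpha -> alpha @` N = N ->
  forall g, centralizer mul N (alpha g) <-> centralizer mul N g.
Proof.
move=> amul ainj aN g; split => Cg m Nm.
- by apply: ainj; rewrite !amul; apply: Cg; rewrite -aN; exists m.
- by move: Nm; rewrite -aN => -[n Nn <-]; rewrite /commutant /= -!amul (Cg n Nn).
Qed.

Section Centralizer.
Variables (T : topologicalType) (mul : T -> T -> T) (inv : T -> T) (e : T).
Hypothesis mulA : forall x y z, mul x (mul y z) = mul (mul x y) z.
Hypothesis mulg1 : forall x, mul x e = x.
Hypothesis mulVg : forall x, mul (inv x) x = e.
Hypothesis mulgV : forall x, mul x (inv x) = e.
Hypothesis mul_continuous : continuous (fun p : T * T => mul p.1 p.2).
Hypothesis inv_continuous : continuous inv.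
Hypothesis hausdorffT : hausdorff_space T.
Variable N : set T.
Hypothesis finN : finite_set N.
Hypothesis normalN : is_normal mul inv N.

Lemma conj_eq_commute h m : mul (mul h m) (inv h) = m <-> mul m h = mul h m.
Proof.
split=> [chm|mh]; first by rewrite -{1}chm -mulA mulVg mulg1.
by rewrite -mh -mulA mulgV mulg1.
Qed.

Lemma continuous_lmul m : continuous (mul m).
Proof.
exact: (@continuous_pointwise_mul _ mul (fun=> m) id) mul_continuous
  (@cst_continuous T T m) (fun x => cvg_id).
Qed.

Lemma continuous_rmul m : continuous (mul^~ m).
Proof.
exact: (@continuous_pointwise_mul _ mul id (fun=> m)) mul_continuous
  (fun x => cvg_id) (@cst_continuous T T m).
Qed.

(* [h m h^-1] depends continuously on [h] and ranges in the finite, hence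
   discrete, set [N]; so it stays equal to [m] near any [g] commuting with [m]. *)
Lemma open_commutant m : N m -> open (commutant mul m).
Proof.
move=> Nm; rewrite openE => g gm.
pose c h := mul (mul h m) (inv h).
have cc : continuous c := @continuous_pointwise_mul _ mul (mul^~ m) inv
  mul_continuous (continuous_rmul m) inv_continuous.
have nV : nbhs (c g) (~` (N `\ m)).
  rewrite [c g](iffRL (conj_eq_commute g m) gm); apply: open_nbhs_nbhs; split.
    apply/closed_openC; apply: (iffLR accessible_finite_set_closed).
      exact: hausdorff_accessible.
    exact: finite_setD.
  by move=> [_]; apply.
rewrite /interior /=; near=> h; apply/conj_eq_commute; apply: contrapT => chm.
have : (~` (N `\ m)) (c h) by near: h; exact: cc.
by apply; split; [exact: normalN|exact: chm].
Unshelve. all: by end_near. Qed.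

Lemma closed_commutant m : closed (commutant mul m).
Proof. exact: closed_equalizer hausdorffT (continuous_lmul m) (continuous_rmul m). Qed.

Lemma open_centralizer : open (centralizer mul N).
Proof. by apply: open_fin_bigcap finN _ => m; exact: open_commutant. Qed.

Lemma closed_centralizer : closed (centralizer mul N).
Proof. by apply: closed_bigI => m _; exact: closed_commutant. Qed.

End Centralizer.

Theorem corollary5p13 (T : topologicalType)
  (mul : T -> T -> T) (inv : T -> T) (e : T)
  (HG : is_topological_group mul inv e)
  (Hhaus : hausdorff_space T)
  (Hcpt : compact [set: T])
  (Htd : totally_disconnected [set: T])
  (alpha beta : T -> T)
  (Halpha : is_topological_automorphism mul alpha beta)
  (Htrans : topologically_transitive alpha beta)
  (N : set T)
  (HNfin : finite_set N)
  (HNsub : is_subgroup mul inv e N)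
  (HNnorm : is_normal mul inv N)
  (HNstable : alpha @` N = N) :
  N `<=` centre mul.
Proof.
case: HG => mulA unit invK mul_continuous inv_continuous.
case: Halpha => alpha_mul alphaK betaK _ _.
have mul1g x : mul e x = x by case: (unit x).
have mulg1 x : mul x e = x by case: (unit x).
have mulVg x : mul (inv x) x = e by case: (invK x).
have mulgV x : mul x (inv x) = e by case: (invK x).
have centralizerT : centralizer mul N = setT.
  apply: (transitive_invariant_clopen betaK Htrans).
  - exact: open_centralizer.
  - exact: closed_centralizer.
  - exact: centralizer_morph alpha_mul (can_inj alphaK) HNstable.
  - by exists e => m _; rewrite /commutant /= mulg1 mul1g.
by move=> m Nm g; have /(_ m Nm) : centralizer mul N g by rewrite centralizerT.
Qed.
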